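(* Let $n\ge 3$ and let $Q$ be the subposet of the face poset of $\Delta_{n+1}$ consisting of all faces of the form $A(F)$, $B(F)$, $C(F,S)$, $D(F,S)$ with $F$ a face of $\Delta_n$ and $S\in F$. Let $M$ be the matching on $Q$ pairing $A(F)$ with $B(F)$ for every face $F$ of $\Delta_n$, and $C(F,S)$ with $D(F,S)$ for every face $F$ of $\Delta_n$ and $S\in F$. Then $M$ is a Morse matching on $Q$.
   Context: The Whitehouse complex $\Delta_n$ ($n\ge 3$) is the simplicial complex with vertex set $V_n=\{S\subseteq\{2,\dots,n\}: 2\le |S|\le n-2\}$, in which a subset $F\subseteq V_n$ is a face iff for all $S,T\in F$ one has $S\subseteq T$, $T\subseteq S$, or $S\cap T=\emptyset$. (So $\Delta_3=\{\emptyset\}$.) Its face poset is the set of faces (including $\emptyset$) ordered by inclusion, ranked by cardinality. For a face $F$ of $\Delta_n$: $A(F)=F$; $B(F)=F\cup\{\{2,\dots,n\}\}$; for $S\in F$, $C(F,S)=\{T\cup\{n+1\}: T\in F, S\subseteq T\}\cup\{T: T\in F, S\not\subseteq T\}$ and $D(F,S)=C(F,S)\cup\{S\}$. These are faces of $\Delta_{n+1}$. A matching $M$ on a ranked poset is a set of disjoint cover pairs $x\lessdot y$; orienting all cover edges downward except those in $M$, which are oriented upward, $M$ is a Morse matching if the resulting directed graph is acyclic. *)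

From mathcomp Require Import all_boot.
From Stdlib Require Import Relations.
Set Implicit Arguments. Unset Strict Implicit. Unset Printing Implicit Defensive.

(* Ambient ground type: 'I_(n.+2) = {0,...,n+1}; it contains {2,...,n}
   (vertices of Delta_n) and {2,...,n+1} (vertices of Delta_(n+1)). *)

Section Whitehouse.
Variable n : nat.
Local Notation E := ('I_n.+2).

Definition ground (k : nat) : {set E} := [set i : E | 2 <= i <= k].

Definition is_vertex (k : nat) (S : {set E}) : bool :=
  (S \subset ground k) && (2 <= #|S| <= k - 2).

Definition laminar (F : {set {set E}}) : bool :=
  [forall S in F, forall T in F,
     [|| S \subset T, T \subset S | [disjoint S & T]]].

Definition is_face (k : nat) (F : {set {set E}}) : bool :=
  [forall S in F, is_vertex k S] && laminar F.

Definition top_el : E := ord_max.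

Definition Aface (F : {set {set E}}) : {set {set E}} := F.
Definition Bface (F : {set {set E}}) : {set {set E}} := F :|: [set ground n].
Definition Cface (F : {set {set E}}) (S : {set E}) : {set {set E}} :=
  [set T :|: [set top_el] | T in [set T in F | S \subset T]]
  :|: [set T in F | ~~ (S \subset T)].
Definition Dface (F : {set {set E}}) (S : {set E}) : {set {set E}} :=
  Cface F S :|: [set S].

Definition inQ (G : {set {set E}}) : bool :=
  is_face n.+1 G &&
  ([exists F, is_face n F && ((G == Aface F) || (G == Bface F))]
   || [exists F, exists S, [&& is_face n F, S \in F &
          (G == Cface F S) || (G == Dface F S)]]).

Definition coverQ (x y : {set {set E}}) : bool :=
  [&& inQ x, inQ y, x \proper y &
      [forall z, ~~ [&& inQ z, x \proper z & z \proper y]]].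

Definition matchedM (x y : {set {set E}}) : bool :=
  [exists F, [&& is_face n F, x == Aface F & y == Bface F]]
  || [exists F, exists S, [&& is_face n F, S \in F,
                             x == Cface F S & y == Dface F S]].

End Whitehouse.

(* Generic notion of a Morse matching w.r.t. a cover relation [cov]
   (cov x y means x is covered by y) and a set of pairs [M]
   (M x y means the cover pair x < y is in the matching). *)
Section Morse.
Variable T : finType.

Definition is_matching (cov M : rel T) : Prop :=
  (forall x y, M x y -> cov x y) /\
  (forall x y x' y', M x y -> M x' y' ->
     [|| x == x', x == y', y == x' | y == y'] -> x = x' /\ y = y').

(* Hasse diagram edges oriented downward, except matched ones upward *)
Definition morse_edge (cov M : rel T) (u v : T) : bool :=
  (cov v u && ~~ M v u) || M u v.

Definition is_morse_matching (cov M : rel T) : Prop :=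
  is_matching cov M /\
  forall x, ~ clos_trans T (fun u v => morse_edge cov M u v) x x.
End Morse.

From mathcomp Require Import all_boot zify.
From Stdlib Require Import Relations.
Set Implicit Arguments. Unset Strict Implicit.

(* Give every face u of Q the potential (level u, weight u), ordered
   lexicographically: the level is |u|, minus one if u is the upper face of a
   matched pair, and the weight is twice the number of vertices of u containing
   n+1, plus one if u is not such an upper face.  A matched edge x -> y keeps
   the level and the number of vertices through n+1 but loses the extra one.
   An unmatched cover v < u keeps the level only if u is an upper face B(F) or
   D(F,S), v is not, and v = u - {X}.  Faces A(F) and C(F,S) contain neither
   the ground set {2,...,n} nor a pair Y, Y + (n+1), whereas deleting from B(F)
   or D(F,S) any vertex X avoiding n+1, other than the matched one, leaves such
   a configuration; hence n+1 is in X and the weight drops. *)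

Lemma acyclic_of_potential (T : Type) (R : relation T) (f : T -> nat) :
  (forall u v, R u v -> f v < f u) -> forall x, ~ clos_trans T R x x.
Proof.
move=> Rf; have ct_lt x y : clos_trans T R x y -> f y < f x.
  by elim=> [u v /Rf //|u v w _ ltvu _ ltwv]; exact: ltn_trans ltwv ltvu.
by move=> x /ct_lt; rewrite ltnn.
Qed.

Lemma lex_ltn (K a b c d : nat) :
  c < K -> a < b \/ a = b /\ c < d -> a * K + c < b * K + d.
Proof.
move=> cK [ltab|[-> //]]; last by rewrite ltn_add2l.
have : a.+1 * K <= b * K by rewrite leq_mul2r ltab orbT.
rewrite mulSn; lia.
Qed.

Lemma proper_cardS (T : finType) (A B : {set T}) :
  A \proper B -> #|B| = #|A|.+1 -> exists2 x, x \in B & A = B :\ x.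
Proof.
case/properP=> sAB [x xB xA] cardB; exists x => //.
apply/eqP; rewrite eqEcard subsetD1 sAB xA /=.
by move: (cardsD1 x B); rewrite xB cardB add1n => -[->].
Qed.

Section Whitehouse.
Variable n : nat.
Hypothesis n_ge3 : 3 <= n.
Local Notation E := ('I_n.+2).
Local Notation g := (ground n n).
Local Notation top := (top_el n).
Local Notation face := (is_face n).
Implicit Types (S T X Y Z W : {set E}) (F G u v x y z : {set {set E}}).

Definition nested_or_disjoint (S T : {set E}) :=
  [|| S \subset T, T \subset S | [disjoint S & T]].

Lemma nested_or_disjointC S T : nested_or_disjoint S T = nested_or_disjoint T S.
Proof. by rewrite /nested_or_disjoint disjoint_sym orbCA. Qed.

Lemma is_faceP k G :
  reflect ((forall S, S \in G -> is_vertex k S) /\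
           (forall S T, S \in G -> T \in G -> nested_or_disjoint S T))
          (is_face k G).
Proof.
apply: (iffP andP) => -[/forall_inP vG lamG]; split=> //.
- by move=> S T SG TG; move/forall_inP: lamG => /(_ S SG)/forall_inP; apply.
- by apply/forall_inP => S SG; apply/forall_inP => T; apply: lamG.
Qed.

Lemma face_vertex k F S : is_face k F -> S \in F -> is_vertex k S.
Proof. by case/is_faceP=> vF _ /vF. Qed.

Lemma face_nested_or_disjoint k F S T :
  is_face k F -> S \in F -> T \in F -> nested_or_disjoint S T.
Proof. by case/is_faceP=> _; apply. Qed.

Lemma card_ground : #|g| = n.-1.
Proof.
have -> : g = [set: E] :\ ord0 :\ inord 1 :\ ord_max.
  apply/setP=> i; rewrite !inE -!val_eqE /= inordK //.
  by case: i => i /= lt_in2; apply/idP/idP; lia.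
have cardD1E (x : E) (A : {set E}) : x \in A -> #|A :\ x| = #|A|.-1.
  by move=> xA; rewrite (cardsD1 x A) xA.
rewrite !cardD1E ?cardsT ?card_ord // !inE -?val_eqE /= ?inordK //; lia.
Qed.

Lemma top_notin_ground : top \notin g.
Proof. by rewrite inE /= ltnn andbF. Qed.

Lemma top_notin_vertex S : is_vertex n S -> top \notin S.
Proof.
by case/andP=> /subsetP sSg _; apply: contraNN top_notin_ground => /sSg.
Qed.

Lemma top_notin_face F S : face F -> S \in F -> top \notin S.
Proof. by move=> Fface /(face_vertex Fface) /top_notin_vertex. Qed.

Lemma ground_subS : g \subset ground n n.+1.
Proof. by apply/subsetP => x; rewrite !inE; lia. Qed.

Lemma top_in_groundS : top \in ground n n.+1.
Proof. by rewrite inE /= leqnn andbT; lia. Qed.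

Lemma vertex_lift S : is_vertex n S -> is_vertex n.+1 S.
Proof.
case/andP=> sSg bS; rewrite [is_vertex _ _]/is_vertex (subset_trans sSg ground_subS).
by move: bS; lia.
Qed.

Lemma vertex_setU1_top S : is_vertex n S -> is_vertex n.+1 (top |: S).
Proof.
move=> vS; have tS := top_notin_vertex vS; case/andP: vS => sSg bS.
rewrite [is_vertex _ _]/is_vertex cardsU1 tS subUset sub1set top_in_groundS.
by rewrite (subset_trans sSg ground_subS); move: bS; lia.
Qed.

Lemma vertex_ground : is_vertex n.+1 g.
Proof.
by rewrite [is_vertex _ _]/is_vertex card_ground ground_subS; lia.
Qed.

Lemma ground_notin_face F : face F -> g \notin F.
Proof.
move=> Fface; apply/negP => /(face_vertex Fface) /andP[_].
by rewrite card_ground; lia.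
Qed.

Lemma is_face_lift F : face F -> is_face n.+1 F.
Proof.
case/is_faceP=> vF lamF; apply/is_faceP; split=> // S /vF; exact: vertex_lift.
Qed.

Lemma is_face_setU1 k G X : is_face k G -> is_vertex k X ->
  (forall T, T \in G -> nested_or_disjoint X T) -> is_face k (X |: G).
Proof.
case/is_faceP=> vG lamG vX lamX; apply/is_faceP; split.
  by move=> S /setU1P[->|/vG].
move=> S T /setU1P[->|SG] /setU1P[->|TG].
- by rewrite /nested_or_disjoint subxx.
- exact: lamX.
- by rewrite nested_or_disjointC lamX.
- exact: lamG.
Qed.

Definition raise (S T : {set E}) := if S \subset T then top |: T else T.

Lemma Cface_imset F S : Cface F S = raise S @: F.
Proof.
apply/setP=> X; apply/setUP/imsetP => [[/imsetP[T]|]|[T TF ->]].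
- by rewrite inE => /andP[TF sST] ->; exists T; rewrite // /raise sST setUC.
- by rewrite inE => /andP[XF nsSX]; exists X; rewrite // /raise (negbTE nsSX).
- rewrite /raise; case: ifP => sST; [left | right]; last by rewrite inE TF sST.
  by rewrite setUC; apply: imset_f; rewrite inE TF.
Qed.

Lemma top_in_raise S T : top \notin T -> (top \in raise S T) = (S \subset T).
Proof. by move=> tT; rewrite /raise; case: ifP; rewrite ?setU11 ?(negbTE tT). Qed.

Lemma raise_nested_or_disjoint S T1 T2 : S != set0 -> top \notin T1 -> top \notin T2 ->
  nested_or_disjoint T1 T2 -> nested_or_disjoint (raise S T1) (raise S T2).
Proof.
move=> /set0Pn[s sS] tT1 tT2.
have mixed T T' : top \notin T' -> S \subset T -> ~~ (S \subset T') ->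
    nested_or_disjoint T T' -> nested_or_disjoint (top |: T) T'.
  move=> tT' sST nsST' /or3P[sTT'|sT'T|dTT'].
  - by rewrite (subset_trans sST sTT') in nsST'.
  - by rewrite /nested_or_disjoint (subset_trans sT'T (subsetU1 _ _)) orbT.
  - suff dTT : [disjoint top |: T & T'] by rewrite /nested_or_disjoint dTT !orbT.
    by rewrite -setI_eq0 setIUl !disjoint_setI0 ?disjoints1 ?setU0.
rewrite /raise; case: ifP => sST1; case: ifP => sST2 lam12.
- case/or3P: lam12 => [sT12|sT21|dT12].
  + by rewrite /nested_or_disjoint (setUS _ sT12).
  + by rewrite /nested_or_disjoint (setUS _ sT21) orbT.
  + by move: dT12; rewrite -setI_eq0 => /eqP/setP/(_ s); rewrite !inE !(subsetP _ s sS).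
- by apply: mixed; rewrite ?sST2.
- by rewrite nested_or_disjointC mixed ?sST1 // nested_or_disjointC.
- exact: lam12.
Qed.

Lemma nested_or_disjoint_raise S T :
  nested_or_disjoint S T -> nested_or_disjoint S (raise S T).
Proof.
rewrite /raise; case: ifP => [sST _|//].
by rewrite /nested_or_disjoint (subset_trans sST (subsetU1 _ _)).
Qed.

Lemma vertex_raise S T : is_vertex n T -> is_vertex n.+1 (raise S T).
Proof.
by rewrite /raise; case: ifP => _; [exact: vertex_setU1_top | exact: vertex_lift].
Qed.

Section FaceOfDelta.
Variable F : {set {set E}}.
Hypothesis Fface : face F.

Lemma is_face_Bface : is_face n.+1 (Bface F).
Proof.
rewrite /Bface setUC; apply: (is_face_setU1 (is_face_lift Fface) vertex_ground).
by move=> T /(face_vertex Fface) /andP[sTg _]; rewrite /nested_or_disjoint sTg orbT.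
Qed.

Variable S : {set E}.
Hypothesis SF : S \in F.

Lemma is_face_Cface : is_face n.+1 (Cface F S).
Proof.
have S_neq0 : S != set0.
  by case/andP: (face_vertex Fface SF) => _ /andP[lb _]; rewrite -card_gt0; lia.
rewrite Cface_imset; apply/is_faceP; split.
  by move=> _ /imsetP[T TF ->]; exact/vertex_raise/(face_vertex Fface TF).
move=> _ _ /imsetP[T1 T1F ->] /imsetP[T2 T2F ->].
by apply: raise_nested_or_disjoint;
  rewrite ?(top_notin_face Fface) ?(face_nested_or_disjoint Fface).
Qed.

Lemma is_face_Dface : is_face n.+1 (Dface F S).
Proof.
rewrite /Dface setUC.
apply: (is_face_setU1 is_face_Cface (vertex_lift (face_vertex Fface SF))).
rewrite Cface_imset => _ /imsetP[T TF ->].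
exact/nested_or_disjoint_raise/(face_nested_or_disjoint Fface SF TF).
Qed.

Lemma top_sub_Cface X : X \in Cface F S -> top \in X -> S \subset X.
Proof.
rewrite Cface_imset => /imsetP[T TF ->].
rewrite top_in_raise ?(top_notin_face Fface) // => sST.
by rewrite /raise sST (subset_trans sST (subsetU1 _ _)).
Qed.

Lemma setU1_top_in_Cface : top |: S \in Cface F S.
Proof. by rewrite Cface_imset; apply/imsetP; exists S; rewrite // /raise subxx. Qed.

Lemma notin_Cface : S \notin Cface F S.
Proof.
rewrite Cface_imset; apply/imsetP => -[T TF].
have tS := top_notin_face Fface SF.
rewrite /raise; case: ifP => [_ eS | nsST eST]; last by rewrite eST subxx in nsST.
by move: tS; rewrite eS setU11.
Qed.

End FaceOfDelta.

(* Shared by A(F) and C(F,S), but not by B(F), which contains the ground set,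
   nor by D(F,S), which contains S and S + (n+1). *)
Definition lower_shaped (v : {set {set E}}) :=
  g \notin v /\ forall Y, top \notin Y -> Y \in v -> top |: Y \notin v.

Lemma lower_shaped_face F : face F -> lower_shaped F.
Proof.
move=> Fface; split; first exact: ground_notin_face.
by move=> Y _ _; apply: contraL (setU11 top Y); apply: top_notin_face.
Qed.

Lemma lower_shaped_Cface F S : face F -> lower_shaped (Cface F S).
Proof.
move=> Fface; rewrite Cface_imset; split.
  apply/imsetP=> -[T TF]; rewrite /raise; case: ifP => _ eg.
    by move: top_notin_ground; rewrite eg setU11.
  by rewrite -eg (negbTE (ground_notin_face Fface)) in TF.
move=> Y tY /imsetP[T1 T1F eY]; subst Y; apply/imsetP => -[T2 T2F].
have [tT1 tT2] := (top_notin_face Fface T1F, top_notin_face Fface T2F).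
move: tY; rewrite top_in_raise // => /negbTE nsST1.
rewrite /raise nsST1; case: ifP => [sST2 /(congr1 (fun A => A :\ top))|_ e].
  by rewrite !setU1K // => eT12; rewrite eT12 sST2 in nsST1.
by move: tT2; rewrite -e setU11.
Qed.

Lemma Cface_inj F F' S S' : face F -> S \in F -> face F' -> S' \in F' ->
  Cface F S = Cface F' S' -> S = S'.
Proof.
have sub G G' T T' : face G -> T \in G -> face G' -> T' \in G' ->
    Cface G T = Cface G' T' -> T' \subset T.
  move=> Gface TG G'face T'G' eC; have tT' := top_notin_face G'face T'G'.
  have tC : top |: T \in Cface G' T' by rewrite -eC setU1_top_in_Cface.
  have /subsetP sub1 := top_sub_Cface G'face tC (setU11 _ _).
  apply/subsetP => x xT'.
  by case/setU1P: (sub1 x xT') => // ex; rewrite -ex xT' in tT'.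
move=> Fface SF F'face S'F' eC; apply/eqP; rewrite eqEsubset.
by rewrite (sub F F' S S') // (sub F' F S' S).
Qed.

Variant matched_spec : {set {set E}} -> {set {set E}} -> Prop :=
  | MatchedAB F of face F : matched_spec F (Bface F)
  | MatchedCD F S of face F & S \in F : matched_spec (Cface F S) (Dface F S).

Lemma matchedP x y : reflect (matched_spec x y) (matchedM x y).
Proof.
apply: (iffP orP) => [[/existsP[F /and3P[Fface /eqP-> /eqP->]]|]|[F Fface|F S Fface SF]].
- exact: MatchedAB.
- by case/existsP=> F /existsP[S /and4P[Fface SF /eqP-> /eqP->]]; exact: MatchedCD.
- by left; apply/existsP; exists F; rewrite Fface !eqxx.
- by right; apply/existsP; exists F; apply/existsP; exists S; rewrite Fface SF !eqxx.
Qed.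

Definition upper (y : {set {set E}}) := [exists x, matchedM x y].

Lemma upper_of x y : matchedM x y -> upper y.
Proof. by move=> M; apply/existsP; exists x. Qed.

Lemma lower_shaped_of_matched x y : matchedM x y -> lower_shaped x.
Proof.
by case/matchedP=> [F|F S] Fface *; [apply: lower_shaped_face | apply: lower_shaped_Cface].
Qed.

(* W is the ground set for (A(F), B(F)) and S for (C(F,S), D(F,S)). *)
Lemma matched_witness x y : matchedM x y -> exists W, [/\ W \notin x, top \notin W,
  y = W |: x & forall v, W \in v -> [set Z in x | top \in Z] \subset v -> ~ lower_shaped v].
Proof.
case/matchedP=> [F Fface|F S Fface SF].
  exists g; split; rewrite ?ground_notin_face ?top_notin_ground ?[Bface F]setUC //.
  by move=> v gv _ []; rewrite gv.
exists S; split; rewrite ?notin_Cface ?(top_notin_face Fface) ?[Dface F S]setUC //.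
move=> v Sv /subsetP topv [_ /(_ S (top_notin_face Fface SF) Sv)].
by rewrite topv // inE setU1_top_in_Cface // setU11.
Qed.

Lemma matched_card x y : matchedM x y -> x \proper y /\ #|y| = #|x|.+1.
Proof.
case/matched_witness=> W [Wx _ -> _]; rewrite cardsU1 Wx.
by split=> //; rewrite properUr // sub1set.
Qed.

Lemma matched_lower_not_upper x y : matchedM x y -> ~~ upper x.
Proof.
move=> M; apply/existsPn => z; apply/negP => /matched_witness[W [_ _ ex notL]].
apply: (notL x); last exact: lower_shaped_of_matched M; rewrite ex ?setU11 //.
by apply/subsetP => Z; rewrite inE => /andP[Zz _]; rewrite setU1r.
Qed.

Lemma matched_lower_uniq x x' y y' : matchedM x y -> matchedM x' y' -> y = y' -> x = x'.
Proof.
move=> /matched_witness[W [Wx tW eWx notL]] M' eyy'; rewrite -{}eyy' in M'.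
have /matched_witness[W' [W'x' tW' eWx' _]] := M'.
suff eW : W = W' by rewrite -(setU1K Wx) -(setU1K W'x') -eWx -eWx' eW.
apply/eqP/negP => nW; apply: (notL x'); last exact: lower_shaped_of_matched M'.
  by have := setU11 W x; rewrite -eWx eWx' => /setU1P[eW|//]; rewrite eW eqxx in nW.
apply/subsetP => Z; rewrite inE => /andP[Zx tZ].
have := setU1r W Zx; rewrite -eWx eWx' => /setU1P[eZ|//].
by rewrite -eZ tZ in tW'.
Qed.

Lemma matched_upper_uniq x x' y y' : matchedM x y -> matchedM x' y' -> x = x' -> y = y'.
Proof.
case/matchedP=> [F Fface|F S Fface SF] /matchedP[F' F'face|F' S' F'face S'F'] eF.
- by rewrite eF.
- have := setU1_top_in_Cface S'F'; rewrite -eF.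
  by move/(top_notin_face Fface); rewrite setU11.
- have := setU1_top_in_Cface SF; rewrite eF.
  by move/(top_notin_face F'face); rewrite setU11.
- by rewrite /Dface eF (Cface_inj Fface SF F'face S'F' eF).
Qed.

Lemma matched_inQ x y : matchedM x y -> inQ x /\ inQ y.
Proof.
case/matchedP=> [F Fface|F S Fface SF]; rewrite /inQ.
  rewrite is_face_lift ?is_face_Bface //; split; apply/orP; left; apply/existsP; exists F;
    by rewrite Fface /Aface eqxx ?orbT.
rewrite is_face_Cface ?is_face_Dface //; split; apply/orP; right; apply/existsP; exists F;
  by apply/existsP; exists S; rewrite Fface SF !eqxx ?orbT.
Qed.

Lemma matched_cover x y : matchedM x y -> coverQ x y.
Proof.
move=> M; have [[Qx Qy] [pxy cardy]] := (matched_inQ M, matched_card M).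
rewrite /coverQ Qx Qy pxy; apply/forallP => z.
apply/negP => /and3P[_ /proper_card ltxz /proper_card]; rewrite cardy ltnS leqNgt ltxz //.
Qed.

Lemma inQ_lower_shaped v : inQ v -> ~~ upper v -> lower_shaped v.
Proof.
case/andP=> _ /orP[/existsP[F /andP[Fface /orP[]/eqP->]]|
                  /existsP[F /existsP[S /and3P[Fface SF /orP[]/eqP->]]]] notU.
- exact: lower_shaped_face.
- by case/negP: notU; apply/upper_of/matchedP/MatchedAB.
- exact: lower_shaped_Cface.
- by case/negP: notU; apply/upper_of/matchedP/MatchedCD.
Qed.

Definition ntop (u : {set {set E}}) := #|[set X in u | top \in X]|.

Lemma ntop_setU1 u W : top \notin W -> ntop (W |: u) = ntop u.
Proof.
move=> tW; apply: eq_card => X; rewrite !inE.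
by case: eqP => [->|]; rewrite ?(negbTE tW) ?andbF.
Qed.

Lemma ntop_setD1 u X : X \in u -> top \in X -> ntop u = (ntop (u :\ X)).+1.
Proof.
move=> Xu tX; rewrite /ntop (cardsD1 X) !inE Xu tX add1n; congr _.+1.
by apply: eq_card => Y; rewrite !inE andbA.
Qed.

Lemma matched_ntop x y : matchedM x y -> ntop y = ntop x.
Proof. by case/matched_witness=> W [_ tW -> _]; apply: ntop_setU1. Qed.

Lemma ntop_lt_cover u v : upper u -> inQ v -> ~~ upper v -> v \proper u ->
  #|u| = #|v|.+1 -> ~~ matchedM v u -> ntop v < ntop u.
Proof.
case/existsP=> x /[dup] M /matched_witness[W [Wx _ eu notL]] Qv notUv pvu cardu.
have lsv := inQ_lower_shaped Qv notUv.
have [X Xu ev] := proper_cardS pvu cardu; subst v.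
have [-> | nXW] := eqVneq X W; first by rewrite {1}eu setU1K // M.
have [tX _ | ntX _] := boolP (top \in X); first by rewrite (ntop_setD1 Xu tX).
case: (notL (u :\ X)) => //; first by rewrite in_setD1 eu setU11 eq_sym nXW.
apply/subsetP => Z; rewrite inE => /andP[Zx tZ]; rewrite in_setD1 eu setU1r // andbT.
by apply: contraNneq ntX => <-.
Qed.

Definition level u := #|u| - upper u.
Definition weight u := (ntop u).*2 + ~~ upper u.
Definition weight_bound := (#|{set E}|).*2.+2.
Definition potential u := level u * weight_bound + weight u.

Lemma level_add_upper u : level u + upper u = #|u|.
Proof.
by rewrite /level; case: (boolP (upper u)) => [/existsP[x /matched_card[_ ->]]|_]; lia.
Qed.

Lemma weight_lt_bound u : weight u < weight_bound.
Proof.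
have : ntop u <= #|{set E}| by apply: max_card.
by rewrite /weight /weight_bound; case: (~~ upper u); lia.
Qed.

Lemma potential_morse_edge u v :
  morse_edge (@coverQ n) (@matchedM n) u v -> potential v < potential u.
Proof.
move=> uv; apply: lex_ltn (weight_lt_bound v) _; rewrite /weight.
have := level_add_upper u; have := level_add_upper v.
case/orP: uv => [/andP[/and4P[Qv _ pvu _] notM] | M].
  have ltvu := proper_card pvu.
  case Uv: (upper v); case Uu: (upper u) => /= lv lu; rewrite -lv -lu in ltvu;
    try by left; lia.
  have [elvu|] := eqVneq (level v) (level u); last by left; lia.
  have cardu : #|u| = #|v|.+1 by rewrite -lv -lu elvu addn0 addn1.
  by right; split=> //; have := ntop_lt_cover Uu Qv (negbT Uv) pvu cardu notM; lia.
have [[_ cardv] ntopv] := (matched_card M, matched_ntop M).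
have Uv := upper_of M; have /negbTE Uu := matched_lower_not_upper M.
rewrite Uu Uv cardv ntopv /= => lv lu; rewrite -lu in lv.
by right; split; lia.
Qed.

End Whitehouse.

Theorem mainTheorem10 (n : nat) (hn : 3 <= n) :
  is_morse_matching (@coverQ n) (@matchedM n).
Proof.
split; last exact: acyclic_of_potential (potential_morse_edge hn).
split=> [x y|x y x' y' M M']; first exact: matched_cover.
case/or4P=> /eqP exy.
- by split=> //; exact: (matched_upper_uniq M M' exy).
- by subst y'; case/negP: (matched_lower_not_upper hn M); apply: upper_of M'.
- by subst x'; case/negP: (matched_lower_not_upper hn M'); apply: upper_of M.
- by split=> //; exact: (matched_lower_uniq hn M M' exy).
Qed.
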